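(* For $n\ge2$ let $c=c(n)>0$ be the unique value with $\Pr_{\mathbf{g}\sim N(0,1)}[|\mathbf{g}|\le c]=(1/2)^{1/n}$, and let $K=[-c,c]^n\subseteq\mathbb{R}^n$ (so $\mathrm{vol}(K)=1/2$), viewed as $K:\mathbb{R}^n\to\{-1,1\}$. Then $\mathsf{W}^{\le2}[K]=O\big(\tfrac{\log^2 n}{n}\big)$.
   Context: $\mathrm{vol}(K)=\Pr_{\mathbf{g}\sim N(0,I_n)}[\mathbf{g}\in K]$. $K(x)=1$ if $x\in K$ and $-1$ otherwise. For $S\in\mathbb{N}^n$, $H_S(x)=\prod_i h_{S_i}(x_i)$ with $h_j$ the normalized univariate Hermite polynomials; $\tilde f(S)=\mathbf{E}_{\mathbf{g}\sim N(0,I_n)}[f(\mathbf{g})H_S(\mathbf{g})]$, $|S|=\sum_iS_i$, and $\mathsf{W}^{\le2}[f]=\sum_{|S|\le2}\tilde f(S)^2$. The $O(\cdot)$ hides an absolute constant. *)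

From Stdlib Require Import Reals Lra Lia Factorial.
Open Scope R_scope.

Definition gauss_pdf (t : R) : R := exp (- (t ^ 2) / 2) / sqrt (2 * PI).

Definition improper_int (f : R -> R) (l : R) : Prop :=
  forall eps : R, 0 < eps -> exists M : R, 0 < M /\
    forall a b : R, a <= - M -> M <= b ->
      exists pr : Riemann_integrable f a b, Rabs (RiemannInt pr - l) < eps.

(* Points of R^n are represented as x : nat -> R, coordinates 0..n-1. *)
Definition upd (x : nat -> R) (i : nat) (t : R) : nat -> R :=
  fun j => if Nat.eqb j i then t else x j.

(* gexp n F v : E_{g ~ N(0, I_n)} [F g] = v, as an iterated (improper,
   Riemann) Gaussian integral over coordinates 0..n-1. *)
Fixpoint gexp (n : nat) (F : (nat -> R) -> R) (v : R) : Prop :=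
  match n with
  | O => v = F (fun _ => 0)
  | S m => exists G : R -> R,
      (forall t : R, gexp m (fun x => F (upd x m t)) (G t)) /\
      improper_int (fun t => G t * gauss_pdf t) v
  end.

(* Probabilists' Hermite polynomials He_j and normalized h_j = He_j / sqrt(j!). *)
Fixpoint He2 (j : nat) (x : R) : R * R :=  (* (He_j x, He_{j+1} x) *)
  match j with
  | O => (1, x)
  | S k => let (a, b) := He2 k x in (b, x * b - INR (S k) * a)
  end.
Definition He (j : nat) (x : R) : R := fst (He2 j x).
Definition hnorm (j : nat) (x : R) : R := He j x / sqrt (INR (fact j)).

Fixpoint HS (n : nat) (S : nat -> nat) (x : nat -> R) : R :=
  match n with
  | O => 1
  | Datatypes.S m => HS m S x * hnorm (S m) (x m)
  end.

(* Sum of F S over multi-indices S in N^n (S i = 0 for i >= n) with |S| <= k. *)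
Fixpoint sum_multi (n k : nat) (F : (nat -> nat) -> R) : R :=
  match n with
  | O => F (fun _ => O)
  | S m => sum_f_R0 (fun j =>
             sum_multi m (k - j) (fun T => F (fun i => if Nat.eqb i m then j else T i))) k
  end.

Fixpoint in_cube (n : nat) (c : R) (x : nat -> R) : bool :=
  match n with
  | O => true
  | S m => in_cube m c x && (if Rle_dec (Rabs (x m)) c then true else false)
  end.
Definition cubeK (n : nat) (c : R) (x : nat -> R) : R :=
  if in_cube n c x then 1 else -1.

Definition prob_abs_le (c p : R) : Prop :=
  exists pr : Riemann_integrable gauss_pdf (- c) c, RiemannInt pr = p.

(* Since K is a product of intervals, K = 2 * 1_K - 1 and every Hermite coefficient of K
   factorises into one-dimensional truncated Gaussian moments: E[1_{|g|<=c} h_j(g)] is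
   p := (1/2)^(1/n) for j = 0, vanishes for j = 1 by symmetry, and is -sqrt 2 c phi(c) for
   j = 2 (integrate by parts).
   The level-0 coefficient 2 p^n - 1 vanishes, and at level <= 2 only the n multi-indices 2 e_i
   survive, so W^{<=2}[K] = 8 n (c phi(c))^2 p^(2(n-1)).  Finally 1 - p is of order 1/n, which by
   the Gaussian tail estimates forces n phi(c) = O(c + 1), c = O(n phi(c)) and hence c^2 = O(log n):
   so n c phi(c) = O(log n), i.e. W^{<=2}[K] = O(log^2 n / n). *)

From Stdlib Require Import Reals Lra Lia.
From Coquelicot Require Import Coquelicot.
Open Scope R_scope.

Lemma exp_le x y : x <= y -> exp x <= exp y.
Proof. intros [H | ->]; [left; apply exp_increasing |]; auto with real. Qed.

Lemma sqrt_2PI_ge_1 : 1 <= sqrt (2 * PI).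
Proof. rewrite <- sqrt_1. apply sqrt_le_1_alt. generalize PI_RGT_0 PI_4 PI2_1; lra. Qed.

Lemma gauss_pdf_pos t : 0 < gauss_pdf t.
Proof. apply Rdiv_lt_0_compat; [apply exp_pos | generalize sqrt_2PI_ge_1; lra]. Qed.

Lemma gauss_pdf_opp t : gauss_pdf (- t) = gauss_pdf t.
Proof. unfold gauss_pdf. do 3 f_equal. ring. Qed.

Lemma gauss_pdf_le_exp t : gauss_pdf t <= exp (- t ^ 2 / 2).
Proof.
  unfold gauss_pdf, Rdiv. rewrite <- (Rmult_1_r (exp _)) at 2.
  apply Rmult_le_compat_l; [left; apply exp_pos |].
  rewrite <- Rinv_1. apply Rinv_le_contravar; [lra | apply sqrt_2PI_ge_1].
Qed.

Lemma gauss_pdf_le t u : t * t <= u * u -> gauss_pdf u <= gauss_pdf t.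
Proof.
  intro H. unfold gauss_pdf, Rdiv. apply Rmult_le_compat_r.
  - left. apply Rinv_0_lt_compat. generalize sqrt_2PI_ge_1; lra.
  - apply exp_le. simpl. nra.
Qed.

Lemma sq_mul_gauss_pdf_le t : t * t * gauss_pdf t <= 2.
Proof.
  assert (Hexp := exp_ineq1_le (t ^ 2 / 2)).
  assert (Hinv : exp (- t ^ 2 / 2) * exp (t ^ 2 / 2) = 1).
  { rewrite <- exp_plus. replace (- t ^ 2 / 2 + t ^ 2 / 2) with 0 by field. apply exp_0. }
  assert (Hpos := exp_pos (- t ^ 2 / 2)). assert (Hle := gauss_pdf_le_exp t).
  assert (Hsq : t * t <= 2 * exp (t ^ 2 / 2)).
  { replace (t * t) with (2 * (t ^ 2 / 2)) by field. lra. }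
  assert (t * t * exp (- t ^ 2 / 2) <= 2) by nra.
  assert (0 <= t * t) by nra. nra.
Qed.

Lemma is_derive_gauss_pdf t : is_derive gauss_pdf t (- t * gauss_pdf t).
Proof.
  unfold gauss_pdf. auto_derive; auto.
  replace (- t ^ 2 / 2) with (- (t * (t * 1)) * / 2) by (simpl; field).
  field. generalize sqrt_2PI_ge_1; lra.
Qed.

Lemma gauss_pdf_continuous t : continuous gauss_pdf t.
Proof. apply (ex_derive_continuous gauss_pdf). eexists. apply is_derive_gauss_pdf. Qed.

Lemma improper_int_intro (f : R -> R) l :
  (forall eps, 0 < eps -> exists M, forall a b, a <= - M -> M <= b ->
     exists v, is_RInt f a b v /\ Rabs (v - l) < eps) ->
  improper_int f l.
Proof.
  intros H eps Heps. destruct (H eps Heps) as [M HM]. exists (Rmax M 1).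
  assert (HM1 := Rmax_l M 1). assert (H11 := Rmax_r M 1). split; [lra |].
  intros a b Ha Hb. destruct (HM a b) as [v [Hv Hl]]; [lra | lra |].
  exists (ex_RInt_Reals_0 f a b (ex_intro _ v Hv)).
  rewrite <- RInt_Reals, (is_RInt_unique f a b v Hv). exact Hl.
Qed.

Lemma improper_int_elim (f : R -> R) l : improper_int f l ->
  forall eps, 0 < eps -> exists M, 0 < M /\ forall a b, a <= - M -> M <= b ->
    is_RInt f a b (RInt f a b) /\ Rabs (RInt f a b - l) < eps.
Proof.
  intros H eps Heps. destruct (H eps Heps) as [M [HM0 HM]]. exists M. split; [exact HM0 |].
  intros a b Ha Hb. destruct (HM a b Ha Hb) as [pr Hpr]. split.
  - exact (RInt_correct f a b (ex_RInt_Reals_1 f a b pr)).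
  - rewrite (RInt_Reals f a b pr). exact Hpr.
Qed.

Lemma improper_int_ext (f g : R -> R) l :
  (forall t, f t = g t) -> improper_int f l -> improper_int g l.
Proof.
  intros Hfg H. apply improper_int_intro. intros eps Heps.
  destruct (improper_int_elim f l H eps Heps) as [M [_ HM]]. exists M.
  intros a b Ha Hb. destruct (HM a b Ha Hb) as [Hint Hclose].
  exists (RInt f a b). split; [| exact Hclose].
  apply (is_RInt_ext f); auto.
Qed.

Lemma improper_int_lin (f g : R -> R) F G al be :
  improper_int f F -> improper_int g G ->
  improper_int (fun t => al * f t + be * g t) (al * F + be * G).
Proof.
  intros Hf Hg. apply improper_int_intro. intros eps Heps.
  set (D := Rabs al + Rabs be + 1).
  assert (HD : 0 < D) by (unfold D; generalize (Rabs_pos al) (Rabs_pos be); lra).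
  destruct (improper_int_elim f F Hf (eps / D)) as [M1 [_ H1]]; [apply Rdiv_lt_0_compat; lra |].
  destruct (improper_int_elim g G Hg (eps / D)) as [M2 [_ H2]]; [apply Rdiv_lt_0_compat; lra |].
  exists (Rmax M1 M2). intros a b Ha Hb.
  assert (HM1 := Rmax_l M1 M2). assert (HM2 := Rmax_r M1 M2).
  destruct (H1 a b) as [If Bf]; [lra | lra |]. destruct (H2 a b) as [Ig Bg]; [lra | lra |].
  exists (al * RInt f a b + be * RInt g a b). split.
  - exact (is_RInt_plus _ _ a b _ _ (is_RInt_scal f a b al _ If) (is_RInt_scal g a b be _ Ig)).
  - replace (al * RInt f a b + be * RInt g a b - (al * F + be * G))
      with (al * (RInt f a b - F) + be * (RInt g a b - G)) by ring.
    eapply Rle_lt_trans; [apply Rabs_triang |]. rewrite !Rabs_mult.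
    assert (Rabs al * Rabs (RInt f a b - F) <= Rabs al * (eps / D))
      by (apply Rmult_le_compat_l; [apply Rabs_pos | lra]).
    assert (Rabs be * Rabs (RInt g a b - G) <= Rabs be * (eps / D))
      by (apply Rmult_le_compat_l; [apply Rabs_pos | lra]).
    assert (D * (eps / D) = eps) by (field; lra).
    assert (0 < eps / D) by (apply Rdiv_lt_0_compat; lra).
    unfold D in *. nra.
Qed.

Lemma improper_int_scal (f : R -> R) F a :
  improper_int f F -> improper_int (fun t => a * f t) (a * F).
Proof.
  intro H. replace (a * F) with (a * F + 0 * F) by ring.
  apply (improper_int_ext (fun t => a * f t + 0 * f t)); [intro t; ring |].
  apply improper_int_lin; exact H.
Qed.

Lemma improper_int_approx (f : R -> R) l : improper_int f l ->
  forall M0 eps, 0 < eps -> exists K, M0 <= K /\ Rabs (RInt f (- K) K - l) < eps.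
Proof.
  intros H M0 eps Heps. destruct (improper_int_elim f l H eps Heps) as [M [_ HM]].
  exists (Rmax M M0). assert (K1 := Rmax_l M M0). assert (K2 := Rmax_r M M0).
  split; [lra |]. apply HM; lra.
Qed.

Lemma improper_int_ge (f : R -> R) l L : improper_int f l ->
  (exists M, forall a b, a <= - M -> M <= b -> L <= RInt f a b) -> L <= l.
Proof.
  intros H [M HM]. apply Rnot_lt_le. intro Hlt.
  destruct (improper_int_approx f l H M (L - l)) as [K [HK Hclose]]; [lra |].
  assert (HL := HM (- K) K ltac:(lra) HK). apply Rabs_lt_between in Hclose. lra.
Qed.

Lemma improper_int_le (f : R -> R) l U : improper_int f l ->
  (exists M, forall a b, a <= - M -> M <= b -> RInt f a b <= U) -> l <= U.
Proof.
  intros H [M HM]. apply Rnot_lt_le. intro Hlt.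
  destruct (improper_int_approx f l H M (l - U)) as [K [HK Hclose]]; [lra |].
  assert (HU := HM (- K) K ltac:(lra) HK). apply Rabs_lt_between in Hclose. lra.
Qed.

Lemma is_RInt_const_R (a b k : R) : is_RInt (fun _ => k) a b ((b - a) * k).
Proof. exact (is_RInt_const a b k). Qed.

Definition indic (c t : R) : R := if Rle_dec (Rabs t) c then 1 else 0.

Lemma is_RInt_indic_mul (g : R -> R) c a b I : 0 <= c -> a <= - c -> c <= b ->
  is_RInt g (- c) c I -> is_RInt (fun t => indic c t * g t) a b I.
Proof.
  intros Hc Ha Hb HI.
  assert (Hzero : forall u v, u <= v -> (forall t, u < t < v -> c < Rabs t) ->
    is_RInt (fun t => indic c t * g t) u v 0).
  { intros u v Huv Hout.
    assert (H0 := is_RInt_const_R u v 0). rewrite Rmult_0_r in H0.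
    apply (is_RInt_ext (fun _ => 0)); [| exact H0].
    intros t Ht. rewrite Rmin_left, Rmax_right in Ht by lra.
    unfold indic. destruct (Rle_dec (Rabs t) c) as [h | _]; [| symmetry; apply Rmult_0_l].
    specialize (Hout t Ht). lra. }
  assert (Hleft : is_RInt (fun t => indic c t * g t) a (- c) 0).
  { apply Hzero; [lra |]. intros t Ht. rewrite Rabs_left1; lra. }
  assert (Hmid : is_RInt (fun t => indic c t * g t) (- c) c I).
  { apply (is_RInt_ext g); [| exact HI]. intros t Ht.
    rewrite Rmin_left, Rmax_right in Ht by lra.
    unfold indic. destruct (Rle_dec (Rabs t) c) as [_ | h]; [symmetry; apply Rmult_1_l |].
    exfalso. apply h, Rabs_le. lra. }
  assert (Hright : is_RInt (fun t => indic c t * g t) c b 0).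
  { apply Hzero; [lra |]. intros t Ht. rewrite Rabs_right; lra. }
  replace I with (0 + I + 0) by ring.
  exact (is_RInt_Chasles _ a c b _ _ (is_RInt_Chasles _ a (- c) c _ _ Hleft Hmid) Hright).
Qed.

Lemma improper_int_indic_mul (g : R -> R) c I : 0 <= c ->
  is_RInt g (- c) c I -> improper_int (fun t => indic c t * g t) I.
Proof.
  intros Hc HI. apply improper_int_intro. intros eps Heps. exists c.
  intros a b Ha Hb. exists I. split.
  - apply is_RInt_indic_mul; auto.
  - rewrite Rminus_diag, Rabs_R0. exact Heps.
Qed.

(** * The Gaussian integral *)

Definition exp_neg_sq (t : R) : R := exp (- (t * t)).

Lemma exp_neg_sq_continuous t : continuous exp_neg_sq t.
Proof. apply (ex_derive_continuous exp_neg_sq). unfold exp_neg_sq. auto_derive. auto. Qed.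

Lemma RInt_exp_neg_sq_derive y :
  derivable_pt_lim (fun z => RInt exp_neg_sq 0 z) y (exp_neg_sq y).
Proof.
  apply is_derive_Reals, (is_derive_RInt exp_neg_sq (RInt exp_neg_sq 0) 0 y).
  - exists (mkposreal 1 Rlt_0_1). intros z _. apply (@RInt_correct R_CompleteNormedModule).
    apply ex_RInt_continuous. intros; apply exp_neg_sq_continuous.
  - apply exp_neg_sq_continuous.
Qed.

Module GaussIntegral.
From mathcomp Require Import all_boot all_order all_algebra all_classical all_reals all_analysis Rstruct Rstruct_topology.
Import Order.TTheory GRing.Theory Num.Theory.
Import numFieldNormedType.Exports.
Local Open Scope ring_scope.
Local Open Scope classical_set_scope.

Lemma RcosE (x : R) : Rtrigo_def.cos x = cos x.
Proof.
apply/esym; rewrite /Rtrigo_def.cos; case: exist_cos => y.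
rewrite /cos_in /infinite_sum => cos_ub.
have h := @cvg_cos_coeff' R x.
rewrite -(cvg_lim (@Rhausdorff R) h).
apply: (@cvg_lim R^o) => //.
apply/cvgrPdist_lt => /= e /RltP /cos_ub[N Nub].
near=> n.
have nN : (n.-1 >= N)%coq_nat.
  apply/ssrnat.leP; rewrite -ltnS prednK; last by near: n; exact: nbhs_infty_gt.
  by near: n; exact: nbhs_infty_gt.
move: Nub => /(_ _ nN) /[!RdistE] /RltP /=.
rewrite distrC sum_f_R0E prednK; last by near: n; exact: nbhs_infty_gt.
congr (`| _ - _ | < e).
apply: eq_bigr=> k _.
rewrite /cos_n /cos_coeff' RdivE RpowE INRE factE RpowE /Rsqr RmultE.
have -> : ((2 * k)%coq_nat) = k.*2 by rewrite -mul2n.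
have -> : (x * x)%coqR = x ^+ 2 by rewrite expr2.
rewrite -exprnP -exprM mul2n.
have -> : (-1)%coqR = - 1 :> R by []. by rewrite mulrAC.
Unshelve. all: by end_near. Qed.
Lemma RpiE : PI = pi :> R.
Proof.
have cb : cos (PI / 2)%coqR = 0.
  by rewrite -RcosE cos_PI2.
have Pp : (0 < PI / 2)%coqR by apply: PI2_RGT_0.
have pp : 0 < pi / 2 :> R by rewrite divr_gt0 // pi_gt0.
have [h|h|h] := ltgtP (pi / 2) (PI / 2)%coqR.
- have : (0 < Rtrigo_def.cos (pi / 2))%coqR.
    apply: cos_gt_0; last exact/RltP.
    apply/RltP; rewrite RoppE (lt_trans _ pp) // oppr_lt0; exact/RltP.
  by rewrite RcosE cos_pihalf => /Rlt_irrefl.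
- have : 0 < cos (PI / 2)%coqR.
    apply: cos_gt0_pihalf; rewrite h andbT (lt_trans _ (_ : 0 < _)) //.
      by rewrite oppr_lt0.
    exact/RltP.
  by rewrite cb ltxx.
- have t2 : (2%coqR : R) = 2 by rewrite IZRposE INRE.
  move: h; rewrite RdivE t2 => /(congr1 (fun t => t * 2)).
  by rewrite !mulfVK.
Qed.

Lemma derivable_pt_lim_derive1 (f : R^o -> R^o) (x l : R) : derivable_pt_lim f x l ->
  derivable f x 1 /\ f^`() x = l.
Proof.
move=> H.
have C : (fun h : R => h^-1 *: ((f \o shift x) (h *: (1:R^o)) - f x)) @ (0:R)^' --> (l:R^o).
  apply/cvgrPdist_lt => e e0.
  have [d Hd] := H e (RltP e0).
  have d0 : 0 < (d:R) by apply/RltP; exact: cond_pos.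
  near=> h.
  have [hb /eqP hn0] : (ball (0:R) d `\ 0) h by near: h; exact: dnbhs_ball.
  have hn' : h <> 0 by apply/eqP.
  have hd : (Rabs h < d)%coqR by apply/RltP; move: hb; rewrite /ball /= sub0r normrN RabsE.
  move: (Hd h hn' hd) => /RltP; rewrite RabsE distrC /=.
  have -> : (h%:A : R^o) = h by rewrite -[RHS]mulr1.
  rewrite [h + x]addrC.
  have -> : forall u : R^o, h^-1 *: u = h^-1 * u by [].
  by rewrite !RminusE RdivE mulrC.
split; first by apply/cvgP: C.
by rewrite derive1E /derive; apply: cvg_lim.
Unshelve. all: by end_near. Qed.

Lemma integral0_gauss_RInt (x : R) : 0 < x ->
  gauss_integral_proof.integral0_gauss x = RInt exp_neg_sq 0 x.
Proof.
move=> x0.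
have cF : forall y, {for y, continuous (fun z => RInt exp_neg_sq 0 z)}.
  move=> y; apply/continuity_pt_cvg; apply: derivable_continuous_pt.
  exists (exp_neg_sq y); exact: RInt_exp_neg_sq_derive.
have h1 : {within `[0, x], continuous gauss_fun}.
  by apply: continuous_subspaceT => ?; exact: continuous_gauss_fun.
have E := @continuous_FTC2 R gauss_fun (fun z => RInt exp_neg_sq 0 z) 0 x x0 h1.
rewrite /gauss_integral_proof.integral0_gauss /Rintegral E.
- by rewrite RInt_point /= subr0.
- split.
  + move=> y _; have [D _] := @derivable_pt_lim_derive1 _ _ _ (RInt_exp_neg_sq_derive y). exact D.
  + exact: cvg_at_right_filter (cF 0).
  + exact: cvg_at_left_filter (cF x).
- move=> y _; have [_ ->] := @derivable_pt_lim_derive1 _ _ _ (RInt_exp_neg_sq_derive y).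
  by rewrite /exp_neg_sq /gauss_fun RexpE RoppE RmultE expr2.
Qed.

Lemma integral0_gauss_cvg :
  @gauss_integral_proof.integral0_gauss R x @[x --> +oo] --> Num.sqrt (pi : R) / 2.
Proof.
  have : Num.sqrt (@gauss_integral_proof.integral0_gauss R x ^+ 2) @[x --> +oo]
      --> Num.sqrt ((pi : R) / 4).
    apply: continuous_cvg => //;
      [exact: sqrt_continuous|exact: (@gauss_integral_proof.cvg_integral0_gauss_sqr R)].
  rewrite sqrtrM ?pi_ge0// sqrtrV// (_ : 4 = 2 ^+ 2); last first.
    by rewrite expr2 -natrM.
  rewrite sqrtr_sqr ger0_norm//.
  rewrite (_ : (fun _ => Num.sqrt _) = gauss_integral_proof.integral0_gauss)//.
  apply/funext => r; rewrite sqrtr_sqr// ger0_norm//.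
  exact: gauss_integral_proof.integral0_gauss_ge0.
Qed.

Lemma RInt_exp_neg_sq_cvg : forall eps, (0 < eps)%coqR -> exists M,
  forall x, (M <= x)%coqR -> (Rabs (RInt exp_neg_sq 0 x - sqrt PI / 2) < eps)%coqR.
Proof.
move=> e /RltP e0.
have := integral0_gauss_cvg; move/cvgrPdist_lt => /(_ e e0) [M [Mr HM]].
exists (Num.max (M + 1) 1) => x /RleP.
rewrite ge_max => /andP[Mx x1].
have x0 : 0 < x by apply: lt_le_trans x1.
have Mx' : M < x by apply: lt_le_trans Mx; rewrite ltrDl.
have := HM x Mx'.
rewrite integral0_gauss_RInt // RabsE distrC RsqrtE RpiE RminusE RdivE.
have t2 : (2%coqR : R) = 2 by rewrite IZRposE INRE.
by rewrite t2 => /RltP.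
Qed.
End GaussIntegral.

Lemma ex_RInt_gauss_pdf a b : ex_RInt gauss_pdf a b.
Proof. apply (@ex_RInt_continuous R_CompleteNormedModule). intros; apply gauss_pdf_continuous. Qed.

Lemma RInt_gauss_pdf_opp x : RInt gauss_pdf 0 (- x) = - RInt gauss_pdf 0 x.
Proof.
  assert (H := RInt_comp_lin gauss_pdf (-1) 0 0 x (ex_RInt_gauss_pdf _ _)).
  replace (-1 * 0 + 0) with 0 in H by ring. replace (-1 * x + 0) with (- x) in H by ring.
  rewrite <- H, (RInt_ext _ (fun y => scal (-1) (gauss_pdf y))).
  - rewrite (@RInt_scal R_CompleteNormedModule) by apply ex_RInt_gauss_pdf.
    unfold scal; simpl; unfold mult; simpl. ring.
  - intros y _. rewrite <- (gauss_pdf_opp y). do 2 f_equal. ring.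
Qed.

Lemma RInt_gauss_pdf_exp_neg_sq x :
  RInt gauss_pdf 0 x = RInt exp_neg_sq 0 (x / sqrt 2) / sqrt PI.
Proof.
  assert (Hs2 : 0 < sqrt 2) by (apply sqrt_lt_R0; lra).
  assert (HsPI : 0 < sqrt PI) by (apply sqrt_lt_R0, PI_RGT_0).
  assert (Hcont : ex_RInt exp_neg_sq (/ sqrt 2 * 0 + 0) (/ sqrt 2 * x + 0)).
  { apply (@ex_RInt_continuous R_CompleteNormedModule). intros; apply exp_neg_sq_continuous. }
  assert (H := RInt_comp_lin exp_neg_sq (/ sqrt 2) 0 0 x Hcont).
  replace (/ sqrt 2 * 0 + 0) with 0 in H by ring.
  replace (/ sqrt 2 * x + 0) with (x / sqrt 2) in H by (unfold Rdiv; ring).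
  rewrite <- H, (RInt_ext (fun y => scal (/ sqrt 2) (exp_neg_sq (/ sqrt 2 * y + 0)))
                          (fun y => scal (sqrt PI) (gauss_pdf y))).
  - rewrite (@RInt_scal R_CompleteNormedModule) by apply ex_RInt_gauss_pdf.
    unfold scal; simpl; unfold mult; simpl.
    unfold Rdiv. rewrite (Rmult_comm (sqrt PI)), Rmult_assoc, Rinv_r, Rmult_1_r by lra. reflexivity.
  - intros y _. unfold scal; simpl; unfold mult; simpl. unfold gauss_pdf, exp_neg_sq.
    rewrite sqrt_mult by (generalize PI_RGT_0; lra).
    replace (- ((/ sqrt 2 * y + 0) * (/ sqrt 2 * y + 0))) with (- y ^ 2 / 2).
    + field. lra.
    + replace ((/ sqrt 2 * y + 0) * (/ sqrt 2 * y + 0)) with (y * y / (sqrt 2 * sqrt 2))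
        by (field; lra).
      rewrite sqrt_sqrt by lra. field.
Qed.

Lemma RInt_gauss_pdf_half_cvg eps : 0 < eps ->
  exists M, forall x, M <= x -> Rabs (RInt gauss_pdf 0 x - 1 / 2) < eps.
Proof.
  intros Heps.
  assert (Hs2 : 0 < sqrt 2) by (apply sqrt_lt_R0; lra).
  assert (HsPI : 0 < sqrt PI) by (apply sqrt_lt_R0, PI_RGT_0).
  destruct (GaussIntegral.RInt_exp_neg_sq_cvg (eps * sqrt PI)) as [M HM]; [nra |].
  exists (Rmax 0 M * sqrt 2). intros x Hx.
  assert (HxM : M <= x / sqrt 2).
  { apply (Rmult_le_reg_r (sqrt 2)); [lra |].
    replace (x / sqrt 2 * sqrt 2) with x by (field; lra).
    generalize (Rmax_r 0 M) (Rmax_l 0 M); nra. }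
  specialize (HM _ HxM). rewrite RInt_gauss_pdf_exp_neg_sq.
  replace (RInt exp_neg_sq 0 (x / sqrt 2) / sqrt PI - 1 / 2)
    with ((RInt exp_neg_sq 0 (x / sqrt 2) - sqrt PI / 2) / sqrt PI) by (field; lra).
  unfold Rdiv. rewrite Rabs_mult, Rabs_inv, (Rabs_right (sqrt PI)) by lra.
  apply (Rmult_lt_reg_r (sqrt PI)); [lra |].
  rewrite Rmult_assoc, Rinv_l, Rmult_1_r by lra. exact HM.
Qed.

Lemma improper_int_gauss_pdf : improper_int gauss_pdf 1.
Proof.
  apply improper_int_intro. intros eps Heps.
  destruct (RInt_gauss_pdf_half_cvg (eps / 2)) as [M HM]; [lra |].
  exists M. intros a b Ha Hb. exists (RInt gauss_pdf a b).
  split; [apply (@RInt_correct R_CompleteNormedModule), ex_RInt_gauss_pdf |].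
  assert (Hsplit : RInt gauss_pdf a b = RInt gauss_pdf 0 (- a) + RInt gauss_pdf 0 b).
  { rewrite RInt_gauss_pdf_opp,
      <- (@RInt_Chasles R_CompleteNormedModule gauss_pdf a 0 b) by apply ex_RInt_gauss_pdf.
    rewrite <- (@opp_RInt_swap R_CompleteNormedModule gauss_pdf 0 a) by apply ex_RInt_gauss_pdf.
    unfold plus, opp; simpl. ring. }
  rewrite Hsplit.
  assert (Hlo := HM (- a) ltac:(lra)). assert (Hhi := HM b Hb).
  apply Rabs_lt_between in Hlo. apply Rabs_lt_between in Hhi. apply Rabs_lt_between. lra.
Qed.

(** * One-dimensional Hermite moments *)

Lemma hnorm_0 t : hnorm 0 t = 1.
Proof. unfold hnorm, He. simpl. rewrite sqrt_1. field. Qed.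

Lemma hnorm_1 t : hnorm 1 t = t.
Proof. unfold hnorm, He. simpl. rewrite sqrt_1. field. Qed.

Lemma hnorm_2 t : hnorm 2 t = (t * t - 1) / sqrt 2.
Proof. unfold hnorm, He. simpl. replace (1 + 1) with 2 by ring. f_equal. ring. Qed.

Lemma is_RInt_id_mul_gauss_pdf a b :
  is_RInt (fun t => t * gauss_pdf t) a b (gauss_pdf a - gauss_pdf b).
Proof.
  replace (gauss_pdf a - gauss_pdf b) with (minus (- gauss_pdf b) (- gauss_pdf a))
    by (unfold minus, plus, opp; simpl; ring).
  apply (is_RInt_derive (fun t => - gauss_pdf t)).
  - intros t _. unfold gauss_pdf. auto_derive; auto.
    replace (- t ^ 2 / 2) with (- (t * (t * 1)) * / 2) by (simpl; field).
    field. generalize sqrt_2PI_ge_1; lra.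
  - intros t _. apply (ex_derive_continuous (fun t => t * gauss_pdf t)).
    unfold gauss_pdf. auto_derive. auto.
Qed.

Lemma is_RInt_hnorm_2_mul_gauss_pdf a b :
  is_RInt (fun t => hnorm 2 t * gauss_pdf t) a b
    (/ sqrt 2 * (a * gauss_pdf a - b * gauss_pdf b)).
Proof.
  assert (Hsq : is_RInt (fun t => (t * t - 1) * gauss_pdf t) a b
                  (a * gauss_pdf a - b * gauss_pdf b)).
  { replace (a * gauss_pdf a - b * gauss_pdf b)
      with (minus (- b * gauss_pdf b) (- a * gauss_pdf a))
      by (unfold minus, plus, opp; simpl; ring).
    apply (is_RInt_derive (fun t => - t * gauss_pdf t)).
    - intros t _. unfold gauss_pdf. auto_derive; auto.
      replace (- t ^ 2 / 2) with (- (t * (t * 1)) * / 2) by (simpl; field).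
      field. generalize sqrt_2PI_ge_1; lra.
    - intros t _. apply (ex_derive_continuous (fun t => (t * t - 1) * gauss_pdf t)).
      unfold gauss_pdf. auto_derive. auto. }
  apply (is_RInt_ext (fun t => scal (/ sqrt 2) ((t * t - 1) * gauss_pdf t))).
  - intros t _. rewrite hnorm_2. unfold scal; simpl; unfold mult; simpl; unfold Rdiv. ring.
  - exact (is_RInt_scal _ a b _ _ Hsq).
Qed.

Lemma gauss_pdf_decay eps : 0 < eps -> exists M, forall x, M <= Rabs x ->
  gauss_pdf x < eps /\ Rabs x * gauss_pdf x < eps.
Proof.
  intro Heps. exists (Rmax 1 (4 / eps)). intros x Hx.
  assert (H1 := Rmax_l 1 (4 / eps)). assert (H4 := Rmax_r 1 (4 / eps)).
  assert (Hsq := sq_mul_gauss_pdf_le x). assert (Hpos := gauss_pdf_pos x).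
  replace (x * x) with (Rabs x * Rabs x) in Hsq
    by (rewrite <- Rabs_mult; apply Rabs_right; nra).
  assert (Hbig : 4 <= eps * Rabs x).
  { replace 4 with (eps * (4 / eps)) by (field; lra). apply Rmult_le_compat_l; lra. }
  assert (Hax : 0 <= Rabs x * gauss_pdf x) by (apply Rmult_le_pos; [apply Rabs_pos | lra]).
  assert (Hmul : Rabs x * gauss_pdf x * 4 <= Rabs x * gauss_pdf x * (eps * Rabs x))
    by (apply Rmult_le_compat_l; lra).
  assert (Hhalf : Rabs x * gauss_pdf x <= eps / 2).
  { replace (Rabs x * gauss_pdf x * (eps * Rabs x)) with (eps * (Rabs x * Rabs x * gauss_pdf x))
      in Hmul by ring.
    assert (eps * (Rabs x * Rabs x * gauss_pdf x) <= eps * 2) by (apply Rmult_le_compat_l; lra).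
    lra. }
  assert (gauss_pdf x <= Rabs x * gauss_pdf x)
    by (rewrite <- (Rmult_1_l (gauss_pdf x)) at 1; apply Rmult_le_compat_r; lra).
  split; lra.
Qed.

Lemma improper_int_vanishing_primitive (f F : R -> R) :
  (forall a b, is_RInt f a b (F a - F b)) ->
  (forall eps, 0 < eps -> exists M, forall x, M <= Rabs x -> Rabs (F x) < eps) ->
  improper_int f 0.
Proof.
  intros Hprim Hdecay. apply improper_int_intro. intros eps Heps.
  destruct (Hdecay (eps / 2)) as [M HM]; [lra |]. exists (Rabs M).
  intros a b Ha Hb. exists (F a - F b). split; [apply Hprim |].
  assert (HM0 := Rle_abs M). assert (HMpos := Rabs_pos M).
  assert (HMa : Rabs (F a) < eps / 2) by (apply HM; rewrite Rabs_left1; lra).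
  assert (HMb : Rabs (F b) < eps / 2) by (apply HM; rewrite Rabs_right; lra).
  apply Rabs_lt_between in HMa. apply Rabs_lt_between in HMb. apply Rabs_lt_between. lra.
Qed.

Definition hermite_mean (j : nat) : R := match j with O => 1 | _ => 0 end.

Lemma improper_int_hnorm_mul_gauss_pdf j : (j <= 2)%nat ->
  improper_int (fun t => hnorm j t * gauss_pdf t) (hermite_mean j).
Proof.
  intro Hj. destruct j as [| [| [| j]]]; [| | | lia]; simpl.
  - apply (improper_int_ext gauss_pdf); [intro t; rewrite hnorm_0; ring |].
    exact improper_int_gauss_pdf.
  - apply (improper_int_vanishing_primitive _ gauss_pdf).
    + intros a b. apply (is_RInt_ext (fun t => t * gauss_pdf t)).
      * intros t _. rewrite hnorm_1. reflexivity.
      * apply is_RInt_id_mul_gauss_pdf.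
    + intros eps Heps. destruct (gauss_pdf_decay eps Heps) as [M HM]. exists M.
      intros x Hx. rewrite Rabs_right by (left; apply gauss_pdf_pos). apply HM, Hx.
  - apply (improper_int_vanishing_primitive _ (fun t => / sqrt 2 * (t * gauss_pdf t))).
    + intros a b. replace (/ sqrt 2 * (a * gauss_pdf a) - / sqrt 2 * (b * gauss_pdf b))
        with (/ sqrt 2 * (a * gauss_pdf a - b * gauss_pdf b)) by ring.
      apply is_RInt_hnorm_2_mul_gauss_pdf.
    + assert (Hinv : 0 < / sqrt 2 < 1).
      { assert (1 < sqrt 2) by (rewrite <- sqrt_1; apply sqrt_lt_1_alt; lra).
        split; [apply Rinv_0_lt_compat; lra |].
        rewrite <- Rinv_1. apply Rinv_lt_contravar; lra. }
      intros eps Heps. destruct (gauss_pdf_decay eps Heps) as [M HM]. exists M.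
      intros x Hx. destruct (HM x Hx) as [_ Hdecay].
      rewrite Rabs_mult, Rabs_mult, (Rabs_right (/ sqrt 2)), (Rabs_right (gauss_pdf x))
        by (try apply Rle_ge, Rlt_le, gauss_pdf_pos; lra).
      assert (0 <= Rabs x * gauss_pdf x)
        by (apply Rmult_le_pos; [apply Rabs_pos | apply Rlt_le, gauss_pdf_pos]).
      nra.
Qed.

Definition trunc_hermite_mean (c p : R) (j : nat) : R :=
  match j with O => p | 2 => - sqrt 2 * c * gauss_pdf c | _ => 0 end.

Lemma improper_int_indic_hnorm_mul_gauss_pdf c p j :
  0 <= c -> is_RInt gauss_pdf (- c) c p -> (j <= 2)%nat ->
  improper_int (fun t => indic c t * hnorm j t * gauss_pdf t) (trunc_hermite_mean c p j).
Proof.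
  intros Hc Hp Hj.
  apply (improper_int_ext (fun t => indic c t * (hnorm j t * gauss_pdf t)));
    [intro t; ring |].
  apply improper_int_indic_mul; [exact Hc |].
  destruct j as [| [| [| j]]]; [| | | lia]; simpl.
  - apply (is_RInt_ext gauss_pdf); [intros t _; rewrite hnorm_0, Rmult_1_l; reflexivity | exact Hp].
  - apply (is_RInt_ext (fun t => t * gauss_pdf t)); [intros t _; rewrite hnorm_1; reflexivity |].
    replace 0 with (gauss_pdf (- c) - gauss_pdf c) by (rewrite gauss_pdf_opp; ring).
    apply is_RInt_id_mul_gauss_pdf.
  - replace (- sqrt 2 * c * gauss_pdf c)
      with (/ sqrt 2 * (- c * gauss_pdf (- c) - c * gauss_pdf c)).
    + apply is_RInt_hnorm_2_mul_gauss_pdf.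
    + rewrite gauss_pdf_opp.
      replace (- c * gauss_pdf c - c * gauss_pdf c) with (- (sqrt 2 * sqrt 2) * c * gauss_pdf c)
        by (rewrite sqrt_sqrt by lra; ring).
      field. apply Rgt_not_eq, sqrt_lt_R0. lra.
Qed.

(** * Coefficients of the cube *)

Fixpoint prodn (n : nat) (U : nat -> R) : R :=
  match n with O => 1 | S m => prodn m U * U m end.

Lemma prodn_ext n U V : (forall i, (i < n)%nat -> U i = V i) -> prodn n U = prodn n V.
Proof.
  induction n as [| n IH]; simpl; intros H; [reflexivity |].
  rewrite IH by (intros; apply H; lia). rewrite H by lia. reflexivity.
Qed.

Lemma prodn_mul n U V : prodn n (fun i => U i * V i) = prodn n U * prodn n V.
Proof. induction n as [| n IH]; simpl; [ring | rewrite IH; ring]. Qed.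

Lemma upd_lt x m t i : (i < m)%nat -> upd x m t i = x i.
Proof. intros. unfold upd. destruct (Nat.eqb_spec i m); [lia | reflexivity]. Qed.

Lemma upd_eq x m t : upd x m t m = t.
Proof. unfold upd. rewrite Nat.eqb_refl. reflexivity. Qed.

Lemma gexp_ext n : forall F F' v, (forall x, F x = F' x) -> gexp n F v -> gexp n F' v.
Proof.
  induction n as [| n IH]; simpl; intros F F' v HF H.
  - rewrite H. apply HF.
  - destruct H as [G [HG Hint]]. exists G. split; [| exact Hint].
    intro t. apply (IH (fun x => F (upd x n t))); auto.
Qed.

Lemma gexp_lin n : forall F G v w a b, gexp n F v -> gexp n G w ->
  gexp n (fun x => a * F x + b * G x) (a * v + b * w).
Proof.
  induction n as [| n IH]; simpl; intros F G v w a b HF HG.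
  - rewrite HF, HG. reflexivity.
  - destruct HF as [GF [HGF HintF]], HG as [GG [HGG HintG]].
    exists (fun t => a * GF t + b * GG t). split.
    + intro t. exact (IH _ _ _ _ a b (HGF t) (HGG t)).
    + apply (improper_int_ext (fun t => a * (GF t * gauss_pdf t) + b * (GG t * gauss_pdf t))).
      * intro t. ring.
      * apply improper_int_lin; assumption.
Qed.

Lemma gexp_prodn n (u : nat -> R -> R) (U : nat -> R) :
  (forall i, (i < n)%nat -> improper_int (fun t => u i t * gauss_pdf t) (U i)) ->
  gexp n (fun x => prodn n (fun i => u i (x i))) (prodn n U).
Proof.
  intro H.
  enough (Hscal : forall A, gexp n (fun x => A * prodn n (fun i => u i (x i))) (A * prodn n U)).
  { rewrite <- (Rmult_1_l (prodn n U)).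
    apply (gexp_ext n (fun x => 1 * prodn n (fun i => u i (x i)))); [intro; ring | apply Hscal]. }
  revert u U H. induction n as [| n IH]; intros u U H A; simpl; [reflexivity |].
  exists (fun t => A * prodn n U * u n t). split.
  - intro t. replace (A * prodn n U * u n t) with (A * u n t * prodn n U) by ring.
    apply (gexp_ext n (fun x => A * u n t * prodn n (fun i => u i (x i)))).
    + intro x. rewrite upd_eq.
      rewrite (prodn_ext n (fun i => u i (upd x n t i)) (fun i => u i (x i)))
        by (intros; rewrite upd_lt; auto).
      ring.
    + apply IH. intros i Hi. apply H. lia.
  - rewrite <- Rmult_assoc.
    apply (improper_int_ext (fun t => A * prodn n U * (u n t * gauss_pdf t))); [intro t; ring |].
    apply improper_int_scal, H. lia.
Qed.

Lemma prodn_indic n c x : prodn n (fun i => indic c (x i)) = if in_cube n c x then 1 else 0.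
Proof.
  induction n as [| n IH]; simpl; [reflexivity |]. rewrite IH. unfold indic.
  destruct (in_cube n c x), (Rle_dec (Rabs (x n)) c); simpl; ring.
Qed.

Lemma HS_prodn n S x : HS n S x = prodn n (fun i => hnorm (S i) (x i)).
Proof. induction n as [| n IH]; simpl; [reflexivity | rewrite IH; reflexivity]. Qed.

Lemma cubeK_mul_HS n c S x : cubeK n c x * HS n S x =
  2 * prodn n (fun i => indic c (x i) * hnorm (S i) (x i))
  + (-1) * prodn n (fun i => hnorm (S i) (x i)).
Proof.
  rewrite HS_prodn, prodn_mul, prodn_indic. unfold cubeK.
  destruct (in_cube n c x); ring.
Qed.

Definition cube_coef (n : nat) (c p : R) (S : nat -> nat) : R :=
  2 * prodn n (fun i => trunc_hermite_mean c p (S i)) - prodn n (fun i => hermite_mean (S i)).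

Lemma gexp_cubeK_HS n c p S : 0 <= c -> is_RInt gauss_pdf (- c) c p ->
  (forall i, (i < n)%nat -> (S i <= 2)%nat) ->
  gexp n (fun x => cubeK n c x * HS n S x) (cube_coef n c p S).
Proof.
  intros Hc Hp HS2.
  apply (gexp_ext n (fun x => 2 * prodn n (fun i => indic c (x i) * hnorm (S i) (x i))
                              + (-1) * prodn n (fun i => hnorm (S i) (x i)))).
  { intro x. symmetry. apply cubeK_mul_HS. }
  unfold cube_coef. replace (2 * prodn n (fun i => trunc_hermite_mean c p (S i))
                             - prodn n (fun i => hermite_mean (S i)))
    with (2 * prodn n (fun i => trunc_hermite_mean c p (S i))
          + (-1) * prodn n (fun i => hermite_mean (S i))) by ring.
  apply gexp_lin.
  - apply (gexp_prodn n (fun i t => indic c t * hnorm (S i) t)). intros i Hi.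
    apply improper_int_indic_hnorm_mul_gauss_pdf; auto.
  - apply (gexp_prodn n (fun i => hnorm (S i))). intros i Hi.
    apply improper_int_hnorm_mul_gauss_pdf; auto.
Qed.

(** * Level-two Hermite weight *)

Lemma sum_multi_ext n : forall k F F', (forall S, F S = F' S) ->
  sum_multi n k F = sum_multi n k F'.
Proof.
  induction n as [| n IH]; simpl; intros k F F' H; [apply H |].
  apply sum_eq. intros j _. apply IH. intro S. apply H.
Qed.

Lemma sum_multi_lin n : forall k F G a b,
  sum_multi n k (fun S => a * F S + b * G S) = a * sum_multi n k F + b * sum_multi n k G.
Proof.
  induction n as [| n IH]; simpl; intros k F G a b; [reflexivity |].
  rewrite !scal_sum, <- sum_plus. apply sum_eq. intros j _. rewrite IH. ring.
Qed.

Lemma sum_multi_scal n k F a : sum_multi n k (fun S => a * F S) = a * sum_multi n k F.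
Proof.
  rewrite (sum_multi_ext n k _ (fun S => a * F S + 0 * F S)) by (intro; ring).
  rewrite sum_multi_lin. ring.
Qed.

Fixpoint multi_weight (w : nat -> R) (m k : nat) : R :=
  match m with
  | O => 1
  | S m' => sum_f_R0 (fun j => w j * multi_weight w m' (k - j)) k
  end.

Lemma sum_multi_prodn w m : forall k,
  sum_multi m k (fun S => prodn m (fun i => w (S i))) = multi_weight w m k.
Proof.
  induction m as [| m IH]; simpl; intro k; [reflexivity |].
  apply sum_eq. intros j _. rewrite Nat.eqb_refl, <- IH, <- sum_multi_scal.
  apply sum_multi_ext. intro T.
  rewrite (prodn_ext m (fun i => w (if Nat.eqb i m then j else T i)) (fun i => w (T i))).
  - ring.
  - intros i Hi. destruct (Nat.eqb_spec i m); [lia | reflexivity].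
Qed.

Lemma multi_weight_0 w m : multi_weight w m 0 = w 0%nat ^ m.
Proof. induction m as [| m IH]; simpl; [reflexivity | rewrite IH; ring]. Qed.

Lemma multi_weight_2 w m : w 1%nat = 0 ->
  multi_weight w m 2 = w 0%nat ^ m + INR m * w 2%nat * w 0%nat ^ pred m.
Proof.
  intro Hw1. induction m as [| m IH]; [simpl; ring |].
  change (multi_weight w (S m) 2)
    with (w 0%nat * multi_weight w m 2 + w 1%nat * multi_weight w m 1
          + w 2%nat * multi_weight w m 0).
  rewrite IH, multi_weight_0, Hw1, S_INR. destruct m; simpl; ring.
Qed.

(* The level-0 term is (2 p^n - 1)^2; the only other contributions are S = 2 e_i. *)
Lemma sum_multi_cube_coef_sq n c p :
  sum_multi n 2 (fun S => cube_coef n c p S ^ 2)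
  = (2 * p ^ n - 1) ^ 2 + 8 * INR n * (c * gauss_pdf c) ^ 2 * (p ^ 2) ^ pred n.
Proof.
  set (u := trunc_hermite_mean c p).
  rewrite (sum_multi_ext n 2 _ (fun S =>
      4 * prodn n (fun i => (fun j => u j ^ 2) (S i))
      + 1 * (-4 * prodn n (fun i => (fun j => u j * hermite_mean j) (S i))
             + 1 * prodn n (fun i => (fun j => hermite_mean j ^ 2) (S i))))).
  2:{ intro S. unfold cube_coef. fold u. cbv beta.
      rewrite (prodn_ext n (fun i => u (S i) ^ 2) (fun i => u (S i) * u (S i))) by (intros; ring).
      rewrite (prodn_ext n (fun i => hermite_mean (S i) ^ 2)
                 (fun i => hermite_mean (S i) * hermite_mean (S i))) by (intros; ring).
      rewrite !prodn_mul. ring. }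
  rewrite !sum_multi_lin, (sum_multi_prodn (fun j => u j ^ 2)),
    (sum_multi_prodn (fun j => u j * hermite_mean j)),
    (sum_multi_prodn (fun j => hermite_mean j ^ 2)).
  rewrite !multi_weight_2 by (unfold u; simpl; ring).
  unfold u, trunc_hermite_mean, hermite_mean.
  replace ((- sqrt 2 * c * gauss_pdf c) ^ 2) with (sqrt 2 ^ 2 * (c * gauss_pdf c) ^ 2) by ring.
  rewrite pow2_sqrt by lra.
  rewrite <- pow_mult, Nat.mul_comm, pow_mult.
  replace ((p * 1) ^ n) with (p ^ n) by (rewrite Rmult_1_r; reflexivity).
  rewrite !pow1. simpl. ring.
Qed.

(** * Gaussian tails *)

Lemma is_RInt_gauss_pdf a b : is_RInt gauss_pdf a b (RInt gauss_pdf a b).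
Proof. apply (@RInt_correct R_CompleteNormedModule), ex_RInt_gauss_pdf. Qed.

Lemma RInt_gauss_pdf_Chasles a m b :
  RInt gauss_pdf a b = RInt gauss_pdf a m + RInt gauss_pdf m b.
Proof.
  symmetry. exact (@RInt_Chasles R_CompleteNormedModule gauss_pdf a m b
                     (ex_RInt_gauss_pdf a m) (ex_RInt_gauss_pdf m b)).
Qed.

Lemma RInt_gauss_pdf_opp_bounds a b : RInt gauss_pdf (- b) (- a) = RInt gauss_pdf a b.
Proof.
  rewrite (RInt_gauss_pdf_Chasles (- b) 0 (- a)), (RInt_gauss_pdf_Chasles a 0 b).
  rewrite <- (@opp_RInt_swap R_CompleteNormedModule gauss_pdf 0 (- b)) by apply ex_RInt_gauss_pdf.
  rewrite <- (@opp_RInt_swap R_CompleteNormedModule gauss_pdf 0 a) by apply ex_RInt_gauss_pdf.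
  rewrite !RInt_gauss_pdf_opp. unfold opp; simpl. ring.
Qed.

Lemma RInt_gauss_pdf_ge (u v k : R) : u <= v -> (forall t, u < t < v -> k <= gauss_pdf t) ->
  (v - u) * k <= RInt gauss_pdf u v.
Proof.
  intros Huv Hk.
  exact (is_RInt_le _ _ u v _ _ Huv (is_RInt_const_R u v k) (is_RInt_gauss_pdf u v) Hk).
Qed.

Lemma RInt_gauss_pdf_split (a b c p : R) : is_RInt gauss_pdf (- c) c p ->
  RInt gauss_pdf a b = RInt gauss_pdf c (- a) + p + RInt gauss_pdf c b.
Proof.
  intro Hp. rewrite <- (is_RInt_unique _ _ _ _ Hp).
  rewrite (RInt_gauss_pdf_Chasles a (- c) b), (RInt_gauss_pdf_Chasles (- c) c b).
  rewrite <- (RInt_gauss_pdf_opp_bounds a (- c)), Ropp_involutive. lra.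
Qed.

Lemma RInt_gauss_pdf_tail_ge c d b : 0 <= c -> 0 <= d -> c + d <= b ->
  d * gauss_pdf (c + d) <= RInt gauss_pdf c b.
Proof.
  intros Hc Hd Hb. rewrite (RInt_gauss_pdf_Chasles c (c + d) b).
  assert (Hrest : 0 <= RInt gauss_pdf (c + d) b).
  { replace 0 with ((b - (c + d)) * 0) by ring.
    apply RInt_gauss_pdf_ge; [lra |]. intros t _. apply Rlt_le, gauss_pdf_pos. }
  assert (Hnear : d * gauss_pdf (c + d) <= RInt gauss_pdf c (c + d)).
  { replace d with (c + d - c) at 1 by ring.
    apply RInt_gauss_pdf_ge; [lra |]. intros t Ht. apply gauss_pdf_le. nra. }
  lra.
Qed.

(* Mills' ratio: on [c, b], gauss_pdf t <= (t / c) gauss_pdf t, whose integral is explicit. *)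
Lemma RInt_gauss_pdf_tail_le c b : 0 < c -> c <= b -> RInt gauss_pdf c b <= gauss_pdf c / c.
Proof.
  intros Hc Hb.
  assert (Hmills : is_RInt (fun t => scal (/ c) (t * gauss_pdf t)) c b
                     (scal (/ c) (gauss_pdf c - gauss_pdf b)))
    by exact (is_RInt_scal _ c b _ _ (is_RInt_id_mul_gauss_pdf c b)).
  assert (Hle := is_RInt_le _ _ c b _ _ Hb (is_RInt_gauss_pdf c b) Hmills).
  unfold scal in Hle; simpl in Hle; unfold mult in Hle; simpl in Hle.
  assert (Hinv : 0 < / c) by (apply Rinv_0_lt_compat, Hc).
  assert (Hpb := gauss_pdf_pos b).
  enough (RInt gauss_pdf c b <= / c * (gauss_pdf c - gauss_pdf b)) by (unfold Rdiv; nra).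
  apply Hle. intros t Ht. assert (Hpt := gauss_pdf_pos t).
  assert (1 <= / c * t) by (replace 1 with (/ c * c) by (field; lra); apply Rmult_le_compat_l; lra).
  nra.
Qed.

Lemma gauss_mass_tail_ge c (p : R) : 0 <= c -> is_RInt gauss_pdf (- c) c p ->
  p + 2 * (/ (c + 1) * gauss_pdf (c + / (c + 1))) <= 1.
Proof.
  intros Hc Hp. set (d := / (c + 1)).
  assert (Hd : 0 < d) by (apply Rinv_0_lt_compat; lra).
  apply (improper_int_ge _ _ _ improper_int_gauss_pdf). exists (c + d).
  intros a b Ha Hb. rewrite (RInt_gauss_pdf_split a b c p Hp).
  assert (Hleft := RInt_gauss_pdf_tail_ge c d (- a) Hc ltac:(lra) ltac:(lra)).
  assert (Hright := RInt_gauss_pdf_tail_ge c d b Hc ltac:(lra) Hb).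
  lra.
Qed.

Lemma gauss_mass_tail_le c (p : R) : 0 < c -> is_RInt gauss_pdf (- c) c p ->
  1 <= p + 2 * (gauss_pdf c / c).
Proof.
  intros Hc Hp.
  apply (improper_int_le _ _ _ improper_int_gauss_pdf). exists c.
  intros a b Ha Hb. rewrite (RInt_gauss_pdf_split a b c p Hp).
  assert (Hleft := RInt_gauss_pdf_tail_le c (- a) Hc ltac:(lra)).
  assert (Hright := RInt_gauss_pdf_tail_le c b Hc Hb).
  lra.
Qed.

Lemma gauss_pdf_shift_ge c : 0 <= c -> gauss_pdf c * exp (- (3 / 2)) <= gauss_pdf (c + / (c + 1)).
Proof.
  intro Hc. set (d := / (c + 1)).
  assert (Hd : d * (c + 1) = 1) by (unfold d; field; lra).
  assert (Hd0 : 0 < d) by (apply Rinv_0_lt_compat; lra).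
  unfold gauss_pdf, Rdiv. rewrite Rmult_assoc, (Rmult_comm (/ _)), <- Rmult_assoc.
  apply Rmult_le_compat_r; [left; apply Rinv_0_lt_compat; generalize sqrt_2PI_ge_1; lra |].
  rewrite <- exp_plus. apply exp_le. simpl. nra.
Qed.

(** * The width of the cube *)

Lemma ln_2_bounds : / 2 < ln 2 < 1.
Proof.
  split; [apply ln_lt_2 |].
  rewrite <- (ln_exp 1). apply ln_increasing; [lra |].
  generalize (exp_ineq1 1); lra.
Qed.

Lemma Rpower_half_inv_pow n : (0 < n)%nat -> Rpower (1 / 2) (1 / INR n) ^ n = 1 / 2.
Proof.
  intro Hn. assert (HN : 0 < INR n) by (apply lt_0_INR; exact Hn).
  rewrite <- Rpower_pow by (apply exp_pos).
  rewrite Rpower_mult. replace (1 / INR n * INR n) with 1 by (field; lra).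
  apply Rpower_1. lra.
Qed.

Lemma Rpower_half_inv_gap N : 2 <= N ->
  / (4 * N) <= 1 - Rpower (1 / 2) (1 / N) <= / N.
Proof.
  intro HN. set (y := ln 2 / N). assert (Hln := ln_2_bounds).
  assert (Hp : Rpower (1 / 2) (1 / N) = exp (- y)).
  { unfold Rpower, y. f_equal. replace (1 / 2) with (/ 2) by field.
    rewrite ln_Rinv by lra. field. lra. }
  assert (Hy_hi : y <= / N) by (unfold y, Rdiv; rewrite <- (Rmult_1_l (/ N)) at 2;
    apply Rmult_le_compat_r; [left; apply Rinv_0_lt_compat |]; lra).
  assert (Hy_lo : / 2 * / N <= y) by (unfold y, Rdiv;
    apply Rmult_le_compat_r; [left; apply Rinv_0_lt_compat |]; lra).
  assert (HinvN : 0 < / N <= / 2) by (split; [apply Rinv_0_lt_compat | apply Rinv_le_contravar]; lra).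
  rewrite Hp. split.
  - assert (Hexp := exp_ineq1_le y).
    assert (Hinv : exp (- y) * exp y = 1) by (rewrite <- exp_plus, Rplus_opp_l; apply exp_0).
    assert (Hpos := exp_pos (- y)).
    assert (exp (- y) * (1 + y) <= 1) by nra.
    replace (/ (4 * N)) with (/ 2 * (/ 2 * / N)) by (field; lra).
    nra.
  - generalize (exp_ineq1_le (- y)). lra.
Qed.

Lemma exp_3_2_le_9 : exp (3 / 2) <= 9.
Proof.
  apply Rle_trans with (exp 1 * exp 1).
  - rewrite <- exp_plus. apply exp_le. lra.
  - generalize exp_le_3 (exp_pos 1). nra.
Qed.

Lemma gauss_pdf_le_of_tail_gap (N c p : R) : 0 <= c -> 0 < N ->
  is_RInt gauss_pdf (- c) c p -> 1 - p <= / N -> N * gauss_pdf c <= 9 / 2 * (c + 1).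
Proof.
  intros Hc HN Hp Hgap.
  assert (Htail := gauss_mass_tail_ge c p Hc Hp). assert (Hshift := gauss_pdf_shift_ge c Hc).
  set (d := / (c + 1)) in *. assert (Hd : d * (c + 1) = 1) by (unfold d; field; lra).
  assert (Hd0 : 0 < d) by (apply Rinv_0_lt_compat; lra).
  assert (HE : exp (- (3 / 2)) * exp (3 / 2) = 1) by (rewrite <- exp_plus, Rplus_opp_l; apply exp_0).
  assert (HE9 := exp_3_2_le_9). assert (HEpos := exp_pos (- (3 / 2))).
  assert (Hf := gauss_pdf_pos c).
  assert (Hsmall : N * (2 * d * (gauss_pdf c * exp (- (3 / 2))) ) <= 1).
  { assert (2 * d * (gauss_pdf c * exp (- (3 / 2))) <= / N) by nra.
    replace 1 with (N * / N) by (field; lra). apply Rmult_le_compat_l; lra. }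
  assert (Hmul : N * gauss_pdf c * 2 * exp (- (3 / 2)) * (d * (c + 1)) <= c + 1).
  { replace (N * gauss_pdf c * 2 * exp (- (3 / 2)) * (d * (c + 1)))
      with (N * (2 * d * (gauss_pdf c * exp (- (3 / 2)))) * (c + 1)) by ring.
    rewrite <- (Rmult_1_l (c + 1)) at 2. apply Rmult_le_compat_r; lra. }
  rewrite Hd, Rmult_1_r in Hmul.
  assert (HE19 : / 9 <= exp (- (3 / 2))) by nra.
  assert (0 <= N * gauss_pdf c) by nra.
  assert (N * gauss_pdf c * 2 * / 9 <= N * gauss_pdf c * 2 * exp (- (3 / 2)))
    by (apply Rmult_le_compat_l; lra).
  lra.
Qed.

Lemma width_le_of_tail_gap (N c p : R) : 0 < c -> 0 < N ->
  is_RInt gauss_pdf (- c) c p -> / (4 * N) <= 1 - p -> c <= 8 * (N * gauss_pdf c).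
Proof.
  intros Hc HN Hp Hgap. assert (Htail := gauss_mass_tail_le c p Hc Hp).
  assert (H : / (4 * N) <= 2 * (gauss_pdf c / c)) by lra.
  apply (Rmult_le_compat_r (4 * N * c)) in H; [| nra].
  replace (/ (4 * N) * (4 * N * c)) with c in H by (field; lra).
  replace (2 * (gauss_pdf c / c) * (4 * N * c)) with (8 * (N * gauss_pdf c)) in H by (field; lra).
  exact H.
Qed.

Lemma width_sq_le_ln (N c : R) : 2 <= N -> 0 <= c -> c <= 8 * (N * gauss_pdf c) ->
  c * c <= 8 * ln N.
Proof.
  intros HN Hc0 Hc. assert (Hln := ln_2_bounds).
  assert (Hln2 : ln 2 <= ln N) by (apply ln_le; lra).
  destruct (Rle_or_lt c 1) as [Hc1 | Hc1]; [nra |].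
  assert (Hlow : / (8 * N) < gauss_pdf c).
  { apply (Rmult_lt_reg_l (8 * N)); [lra |]. rewrite Rinv_r by lra. lra. }
  assert (Hlog : ln (/ (8 * N)) < - c ^ 2 / 2).
  { rewrite <- (ln_exp (- c ^ 2 / 2)). apply ln_increasing; [apply Rinv_0_lt_compat; lra |].
    generalize (gauss_pdf_le_exp c). lra. }
  rewrite ln_Rinv, ln_mult in Hlog by lra.
  replace 8 with (2 ^ 3) in Hlog by ring. rewrite ln_pow in Hlog by lra.
  simpl in Hlog. lra.
Qed.

Lemma width_density_le_ln (N c p : R) : 2 <= N -> 0 < c -> is_RInt gauss_pdf (- c) c p ->
  / (4 * N) <= 1 - p <= / N -> N * c * gauss_pdf c <= 65 * ln N.
Proof.
  intros HN Hc Hp [Hlo Hhi].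
  assert (Hdens := gauss_pdf_le_of_tail_gap N c p ltac:(lra) ltac:(lra) Hp Hhi).
  assert (Hwidth := width_sq_le_ln N c HN ltac:(lra)
                      (width_le_of_tail_gap N c p Hc ltac:(lra) Hp Hlo)).
  assert (Hln := ln_2_bounds). assert (ln 2 <= ln N) by (apply ln_le; lra).
  assert (N * c * gauss_pdf c <= 9 / 2 * (c + 1) * c) by nra.
  nra.
Qed.

Lemma sum_f_R0_ge_term (f : nat -> R) n i : (forall j, 0 <= f j) -> (i <= n)%nat ->
  f i <= sum_f_R0 f n.
Proof.
  intros Hf. induction n as [| n IH]; intros Hi; simpl.
  - replace i with 0%nat by lia. lra.
  - destruct (Nat.eq_dec i (S n)) as [-> | Hne].
    + assert (0 <= sum_f_R0 f n) by (apply cond_pos_sum; exact Hf). lra.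
    + assert (f i <= sum_f_R0 f n) by (apply IH; lia). generalize (Hf (S n)). lra.
Qed.

Lemma level_le_of_degree_le n (S : nat -> nat) i :
  sum_f_R0 (fun j => INR (S j)) n <= 2 -> (i <= n)%nat -> (S i <= 2)%nat.
Proof.
  intros Hsum Hi. apply INR_le. simpl INR at 2. replace (1 + 1) with 2 by ring.
  eapply Rle_trans; [| exact Hsum].
  apply (sum_f_R0_ge_term (fun j => INR (S j))); [intro; apply pos_INR | exact Hi].
Qed.

Lemma sum_multi_cube_coef_sq_le n c : (2 <= n)%nat -> 0 < c ->
  is_RInt gauss_pdf (- c) c (Rpower (1 / 2) (1 / INR n)) ->
  sum_multi n 2 (fun S => cube_coef n c (Rpower (1 / 2) (1 / INR n)) S ^ 2)
  <= 8 * 65 ^ 2 * ln (INR n) ^ 2 / INR n.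
Proof.
  intros Hn Hc Hp. set (p := Rpower (1 / 2) (1 / INR n)) in *.
  assert (HN : 2 <= INR n) by (apply (le_INR 2) in Hn; simpl in Hn; lra).
  assert (Hpn : p ^ n = 1 / 2) by (apply Rpower_half_inv_pow; lia).
  assert (Hgap := Rpower_half_inv_gap _ HN). fold p in Hgap.
  assert (Hkey := width_density_le_ln (INR n) c p HN Hc Hp Hgap).
  assert (Hq : 0 <= (p ^ 2) ^ pred n <= 1).
  { assert (0 < p) by apply exp_pos.
    assert (0 < / (4 * INR n)) by (apply Rinv_0_lt_compat; lra).
    split; [apply pow_le, pow2_ge_0 | rewrite <- (pow1 (pred n)); apply pow_incr; nra]. }
  assert (Hsq : (INR n * c * gauss_pdf c) ^ 2 <= (65 * ln (INR n)) ^ 2)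
    by (apply pow_incr; split; [| exact Hkey];
        apply Rmult_le_pos; [apply Rmult_le_pos |]; try lra; apply Rlt_le, gauss_pdf_pos).
  rewrite sum_multi_cube_coef_sq, Hpn.
  replace ((2 * (1 / 2) - 1) ^ 2 + 8 * INR n * (c * gauss_pdf c) ^ 2 * (p ^ 2) ^ pred n)
    with (8 * (INR n * c * gauss_pdf c) ^ 2 * (p ^ 2) ^ pred n / INR n) by (field; lra).
  unfold Rdiv. apply Rmult_le_compat_r; [left; apply Rinv_0_lt_compat; lra |].
  rewrite Rpow_mult_distr in Hsq |- *.
  assert (0 <= (INR n * c * gauss_pdf c) ^ 2) by apply pow2_ge_0.
  nra.
Qed.

Theorem fact5p9 :
  exists C : R, 0 < C /\
  forall (n : nat) (c : R), (2 <= n)%nat ->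
    0 < c -> prob_abs_le c (Rpower (1 / 2) (1 / INR n)) ->
    exists coef : (nat -> nat) -> R,
      (forall S : nat -> nat,
         (forall i, (n <= i)%nat -> S i = O) ->
         (sum_f_R0 (fun i => INR (S i)) n <= 2) ->
         gexp n (fun x => cubeK n c x * HS n S x) (coef S)) /\
      sum_multi n 2 (fun S => (coef S) ^ 2) <= C * (ln (INR n)) ^ 2 / INR n.
Proof.
  exists (8 * 65 ^ 2). split; [lra |].
  intros n c Hn Hc [pr Hpr].
  assert (Hp : is_RInt gauss_pdf (- c) c (Rpower (1 / 2) (1 / INR n)))
    by (rewrite <- Hpr, <- RInt_Reals; apply is_RInt_gauss_pdf).
  exists (cube_coef n c (Rpower (1 / 2) (1 / INR n))). split.
  - intros S _ Hdeg. apply gexp_cubeK_HS; [lra | exact Hp |].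
    intros i Hi. apply (level_le_of_degree_le n); [exact Hdeg | lia].
  - exact (sum_multi_cube_coef_sq_le n c Hn Hc Hp).
Qed.
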